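(* Let $G=(V,E)$ be a simple undirected graph with $V=\{1,\dots,|V|\}$, and let $t$ be the size of a maximum cut of $G$. Let $k=2|E||V|^2$ and construct the $(2k+|E|)\times 2|V|$ SNP matrix $M$ as follows. The first $k$ rows ($M_0$) consist of $|V|$ blocks of $k/|V|$ rows each; every row of the $j$-th block ($1\le j\le |V|$) has $0$ in columns $2j-1$ and $2j$ and holes everywhere else. The next $k$ rows ($M_1$) are defined identically but with $1$ instead of $0$. The final $|E|$ rows ($M_G$) correspond to the edges: for an edge $\{i,j\}$ with $i<j$, the row has $0$ in columns $2i-1,2i$, has $1$ in columns $2j-1,2j$, and for every $c\notin\{i,j\}$ has $0$ in column $2c-1$ and $1$ in column $2c$. Then $M$ is ungapped and $$\mathrm{Ungapped\text{-}MEC}(M)=|E|(|V|-2)+2(|E|-t).$$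
   Context: An SNP matrix is a matrix with entries in $\{0,1,-\}$, `-' being a hole. For $X\in\{0,1,-\}^m$, $Y\in\{0,1\}^m$, $d(X,Y)$ counts positions where one is 0 and the other 1 (holes do not count). A matrix is feasible if there exist $H_1,H_2\in\{0,1\}^m$ such that every row $r$ satisfies $d(r,H_1)=0$ or $d(r,H_2)=0$. A flip changes a 0 entry to 1 or a 1 entry to 0 (never to or from a hole). A matrix is ungapped if in every row all holes occur at the start or end of the row. $\mathrm{Ungapped\text{-}MEC}(M)$ is the minimum number of flips needed to make $M$ feasible. *)

From mathcomp Require Import all_boot all_order.
Set Implicit Arguments. Unset Strict Implicit. Unset Printing Implicit Defensive.

(* An SNP row of length m: entries Some false (0), Some true (1), None (hole). *)
Definition snp_row (m : nat) := {ffun 'I_m -> option bool}.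
Definition snp_matrix (m : nat) := seq (snp_row m).

Section SNP.
Variable m : nat.

Definition snp_dist (r : snp_row m) (h : 'I_m -> bool) : nat :=
  #|[set i : 'I_m | if r i is Some b then b != h i else false]|.

Definition feasible (M : snp_matrix m) : Prop :=
  exists H1 H2 : 'I_m -> bool,
    forall r, r \in M -> snp_dist r H1 = 0 \/ snp_dist r H2 = 0.

Definition ungapped (M : snp_matrix m) : Prop :=
  forall r, r \in M -> forall a b c : 'I_m, (a <= b)%N -> (b <= c)%N ->
    r a != None -> r c != None -> r b != None.

Definition row_flips (r r' : snp_row m) : nat := #|[set i : 'I_m | r i != r' i]|.

Definition flips_to (M M' : snp_matrix m) (f : nat) : Prop :=
  all2 (fun r r' : snp_row m => [forall i, (r i == None) == (r' i == None)]) M M'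
  /\ f = sumn [seq row_flips p.1 p.2 | p <- zip M M'].

Definition ungapped_MEC_is (M : snp_matrix m) (v : nat) : Prop :=
  (exists M', flips_to M M' v /\ feasible M') /\
  (forall M' f, flips_to M M' f -> feasible M' -> (v <= f)%N).
End SNP.

(* Graphs on V = 'I_n (vertex j here is vertex j+1 of the paper), edge relation e. *)
Section Reduction.
Variables (n : nat) (e : rel 'I_n).

Definition edge_pred : pred ('I_n * 'I_n) := [pred p : 'I_n * 'I_n | (p.1 < p.2)%N && e p.1 p.2].
Definition num_edges : nat := #|[set p | edge_pred p]|.

Definition cut_size (S : {set 'I_n}) : nat :=
  #|[set p | edge_pred p && ((p.1 \in S) != (p.2 \in S))]|.
Definition max_cut : nat := \max_(S : {set 'I_n}) cut_size S.

Definition kk : nat := 2 * num_edges * n ^ 2.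

(* Column c : 'I_(2n) (0-based) corresponds to paper column c+1; it belongs to
   vertex c./2 (paper vertex c./2 + 1); paper columns 2j-1,2j are our 2(j-1),2(j-1)+1. *)
Definition block_row (b : bool) (j : 'I_n) : snp_row (2 * n) :=
  [ffun c : 'I_(2 * n) => if (c./2 == j)%N then Some b else None].

Definition edge_row (i j : 'I_n) : snp_row (2 * n) :=
  [ffun c : 'I_(2 * n) =>
     if (c./2 == i)%N then Some false
     else if (c./2 == j)%N then Some true
     else Some (odd c)].

Definition M_block (b : bool) : snp_matrix (2 * n) :=
  flatten [seq nseq (kk %/ n) (block_row b j) | j <- enum 'I_n].

Definition M_G : snp_matrix (2 * n) :=
  [seq edge_row p.1 p.2 | p <- enum edge_pred].

Definition reduction_matrix : snp_matrix (2 * n) :=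
  M_block false ++ M_block true ++ M_G.
End Reduction.

(* Ungapped-MEC(M) is the minimum, over haplotype pairs (H1, H2), of the sum over
   the rows of the smaller of d(r, H1) and d(r, H2): flipping a row to agree with
   its nearer haplotype attains this value, and every flip repairs at most one
   mismatch against either haplotype.  In the reduction matrix each vertex block
   consists of k/|V| = 2|E||V| identical rows, which is more than the whole
   claimed optimum; so in an optimal pair H1 is constant on the two columns of
   every vertex and H2 is its complement there.  Such a pair is a vertex set S,
   and an edge row then costs |V| - 2 for the other vertices plus 2 unless the
   edge crosses S, giving |E|(|V| - 2) + 2(|E| - cut(S)). *)

From mathcomp Require Import all_boot all_order.
From mathcomp Require Import zify.
Set Implicit Arguments. Unset Strict Implicit. Unset Printing Implicit Defensive.

Section HaplotypeCost.
Variable m : nat.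
Implicit Types (r : snp_row m) (H : 'I_m -> bool) (M : snp_matrix m) (c : 'I_m).

Definition hap_cost H1 H2 M := \sum_(r <- M) minn (snp_dist r H1) (snp_dist r H2).

Definition mismatch r H c : nat := if r c is Some b then b != H c else false.

Lemma snp_dist_sum_mismatch r H : snp_dist r H = \sum_c mismatch r H c.
Proof.
rewrite /snp_dist -sum1_card big_mkcond /=; apply: eq_bigr => c _.
by rewrite inE /mismatch; case: (r c) => // b; case: (b != H c).
Qed.

Lemma snp_dist_flips r r' H : snp_dist r H <= row_flips r r' + snp_dist r' H.
Proof.
rewrite /snp_dist /row_flips; apply: leq_trans (leq_card_setU _ _).
apply: subset_leq_card; apply/subsetP => i; rewrite !inE.
case: (r i) => [b|] //= mis_b; case: (r' i) => [b'|] //=.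
by case: (eqVneq b b') => [<-|->]; rewrite ?mis_b ?orbT.
Qed.

Lemma hap_cost_le_flips M M' f H1 H2 : flips_to M M' f ->
  (forall r, r \in M' -> snp_dist r H1 = 0 \/ snp_dist r H2 = 0) ->
  hap_cost H1 H2 M <= f.
Proof.
case=> + ->; elim: M M' => [|r M IHM] [|r' M'] //=; first by rewrite /hap_cost big_nil.
move=> /andP[_ holes] fitM'.
rewrite /hap_cost big_cons leq_add //; last first.
  by apply: IHM => // r1 r1M'; apply: fitM'; rewrite inE r1M' orbT.
have [d0|d0] := fitM' r' (mem_head _ _).
  by rewrite geq_min; have := snp_dist_flips r r' H1; rewrite d0 addn0 => ->.
by rewrite geq_min; have := snp_dist_flips r r' H2; rewrite d0 addn0 => ->; rewrite orbT.
Qed.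

Definition fill_row r H : snp_row m :=
  [ffun i => if r i is Some _ then Some (H i) else None].

Lemma row_flips_fill r H : row_flips r (fill_row r H) = snp_dist r H.
Proof. by apply: eq_card => i; rewrite !inE ffunE; case: (r i). Qed.

Lemma snp_dist_fill r H : snp_dist (fill_row r H) H = 0.
Proof.
apply/eqP; rewrite cards_eq0; apply/eqP/setP => i; rewrite !inE ffunE.
by case: (r i) => //= _; rewrite eqxx.
Qed.

Definition nearest_fill H1 H2 r :=
  fill_row r (if snp_dist r H1 <= snp_dist r H2 then H1 else H2).

Lemma flips_to_hap_cost M H1 H2 :
  exists M', flips_to M M' (hap_cost H1 H2 M) /\ feasible M'.
Proof.
exists (map (nearest_fill H1 H2) M); split; last first.
  exists H1, H2 => r /mapP[r0 _ ->]; rewrite /nearest_fill.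
  by case: ifP => _; [left|right]; rewrite snp_dist_fill.
split.
  elim: M => //= r M ->; rewrite andbT; apply/forallP => i.
  by rewrite /nearest_fill ffunE; case: (r i).
elim: M => [|r M IHM] /=; first by rewrite /hap_cost big_nil.
rewrite /hap_cost big_cons -/(hap_cost H1 H2 M) IHM /nearest_fill.
by case: leqP; rewrite row_flips_fill.
Qed.

Lemma ungapped_MEC_is_min_hap_cost M v :
  (exists H1 H2, hap_cost H1 H2 M = v) -> (forall H1 H2, v <= hap_cost H1 H2 M) ->
  ungapped_MEC_is M v.
Proof.
move=> [H1 [H2 <-]] v_min; split; first exact: flips_to_hap_cost.
move=> M' f MM' [G1 [G2 fitM']]; apply: leq_trans (v_min G1 G2) _.
exact: hap_cost_le_flips MM' fitM'.
Qed.
End HaplotypeCost.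

Section VertexColumns.
Variable n : nat.

Lemma col_subproof (p : 'I_n * bool) : p.2 + (p.1 : nat).*2 < 2 * n.
Proof. case: p => [[v ltvn] b] /=; rewrite -muln2; case: b => /=; lia. Qed.
Definition col (p : 'I_n * bool) : 'I_(2 * n) := Ordinal (col_subproof p).

Lemma uncol_subproof (c : 'I_(2 * n)) : (c : nat)./2 < n.
Proof. by case: c => c /=; rewrite -{1}(odd_double_half c) -muln2; case: (odd c) => /=; lia. Qed.
Definition col_vertex (c : 'I_(2 * n)) : 'I_n := Ordinal (uncol_subproof c).

Lemma col_half p : (col p : nat)./2 = p.1.
Proof. exact: half_bit_double. Qed.

Lemma col_odd p : odd (col p) = p.2.
Proof. by case: p => v [] /=; rewrite ?oddS odd_double. Qed.

Lemma col_vertexK v b : col_vertex (col (v, b)) = v.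
Proof. by apply: val_inj; exact: (col_half (v, b)). Qed.

Lemma col_bij : bijective col.
Proof.
exists (fun c => (col_vertex c, odd c)) => [[v b]|c]; first by rewrite col_vertexK col_odd.
by apply: val_inj; rewrite /= odd_double_half.
Qed.

Lemma snp_dist_by_vertex (r : snp_row (2 * n)) H : snp_dist r H =
  \sum_(v : 'I_n) (mismatch r H (col (v, false)) + mismatch r H (col (v, true))).
Proof.
rewrite snp_dist_sum_mismatch (reindex col) /=; last by have [g colK gK] := col_bij; exists g.
rewrite [RHS](eq_bigr (fun v => \sum_(b : bool) mismatch r H (col (v, b)))); last first.
  by move=> v _; rewrite big_bool addnC.
by rewrite pair_big; apply: eq_bigr => -[v b].
Qed.

Lemma sum_ord_except2 (F : 'I_n -> nat) i j : i != j ->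
  (forall v, v != i -> v != j -> F v = 1) -> \sum_v F v = F i + F j + (n - 2).
Proof.
move=> neq_ij F1; have neq_ji : j != i by rewrite eq_sym.
have : \sum_(v : 'I_n) 1 = n by rewrite sum_nat_const card_ord muln1.
rewrite (bigD1 i) // (bigD1 j) //= => card_n.
rewrite (bigD1 i) // (bigD1 j) //= (eq_bigr (fun _ => 1)); last first.
  by move=> v /andP[]; apply: F1.
lia.
Qed.
End VertexColumns.

Section Reduction.
Variables (n : nat) (e : rel 'I_n).
Local Notation E := (num_edges e).
Implicit Types (H : 'I_(2 * n) -> bool) (S : {set 'I_n}).

Lemma block_row_col b (j v : 'I_n) b' :
  block_row b j (col (v, b')) = if v == j then Some b else None.
Proof. by rewrite ffunE col_half. Qed.

Lemma edge_row_col (i j v : 'I_n) b : edge_row i j (col (v, b)) =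
  if v == i then Some false else if v == j then Some true else Some b.
Proof. by rewrite ffunE col_half col_odd. Qed.

Lemma snp_dist_block_row b (j : 'I_n) H : snp_dist (block_row b j) H =
  (b != H (col (j, false))) + (b != H (col (j, true))).
Proof.
rewrite snp_dist_by_vertex (bigD1 j) //= big1 ?addn0.
  by rewrite /mismatch !block_row_col eqxx.
by move=> v neq_vj; rewrite /mismatch !block_row_col (negbTE neq_vj).
Qed.

Lemma snp_dist_edge_row H S (i j : 'I_n) : i != j ->
  (forall v b, H (col (v, b)) = (v \in S)) ->
  snp_dist (edge_row i j) H = 2 * (i \in S) + 2 * (j \notin S) + (n - 2).
Proof.
move=> neq_ij HS; have neq_ji : j != i by rewrite eq_sym.
rewrite snp_dist_by_vertex.
rewrite (sum_ord_except2 neq_ij) => [|v neq_vi neq_vj]; rewrite /mismatch !edge_row_col !HS.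
  by rewrite !eqxx (negbTE neq_ji); case: (i \in S); case: (j \in S).
by rewrite (negbTE neq_vi) (negbTE neq_vj); case: (v \in S).
Qed.

Definition crosses S (p : 'I_n * 'I_n) := (p.1 \in S) != (p.2 \in S).

Lemma num_edges_split S : E = cut_size e S + #|[predD edge_pred e & crosses S]|.
Proof.
have -> : E = #|edge_pred e| by apply: eq_card => p; rewrite inE.
rewrite -(cardID (crosses S)); congr (_ + _).
by apply: eq_card => p; rewrite !inE.
Qed.

Lemma hap_cost_M_G H1 H2 S :
  (forall v b, H1 (col (v, b)) = (v \in S)) -> (forall v b, H2 (col (v, b)) = (v \in ~: S)) ->
  hap_cost H1 H2 (M_G e) = E * (n - 2) + 2 * (E - cut_size e S).
Proof.
move=> H1S H2S; rewrite /hap_cost /M_G big_map big_enum /=.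
rewrite (eq_bigr (fun p => (n - 2) + 2 * ~~ crosses S p)); last first.
  move=> p; rewrite inE => /andP[lt_p _]; have neq_p : p.1 != p.2 by rewrite neq_ltn lt_p.
  rewrite (snp_dist_edge_row neq_p H1S) (snp_dist_edge_row neq_p H2S) /crosses !inE.
  by case: (p.1 \in S); case: (p.2 \in S) => /=; lia.
rewrite big_split /= sum_nat_const -big_distrr /= [in E - _](num_edges_split S) addKn.
have -> : #|edge_pred e| = E by apply: eq_card => p; rewrite inE.
congr (_ + 2 * _); rewrite -sum1_card big_mkcond [RHS]big_mkcond /=; apply: eq_bigr => p _.
by rewrite !inE unfold_in /crosses; case: (_ && _); case: (_ != _).
Qed.

Lemma hap_cost_M_block H1 H2 b : hap_cost H1 H2 (M_block e b) =
  \sum_(j : 'I_n) minn (snp_dist (block_row b j) H1) (snp_dist (block_row b j) H2) * (kk e %/ n).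
Proof.
rewrite /hap_cost /M_block big_flatten big_map big_enum /=; apply: eq_bigr => j _.
by rewrite big_nseq iter_addn_0.
Qed.

Lemma hap_cost_reduction H1 H2 : hap_cost H1 H2 (reduction_matrix e) =
  hap_cost H1 H2 (M_block e false) + hap_cost H1 H2 (M_block e true) + hap_cost H1 H2 (M_G e).
Proof. by rewrite /hap_cost /reduction_matrix !big_cat /= addnA. Qed.

Definition antipodal_at H1 H2 (j : 'I_n) :=
  [&& H1 (col (j, true)) == H1 (col (j, false)),
      H2 (col (j, false)) == ~~ H1 (col (j, false)) &
      H2 (col (j, true)) == ~~ H1 (col (j, false))].

Lemma hap_cost_M_G_antipodal H1 H2 : (forall j, antipodal_at H1 H2 j) ->
  E * (n - 2) + 2 * (E - max_cut e) <= hap_cost H1 H2 (M_G e).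
Proof.
move=> anti; pose S := [set v | H1 (col (v, false))].
have H1S v b : H1 (col (v, b)) = (v \in S).
  by rewrite inE; case: b => //; have /and3P[/eqP -> _ _] := anti v.
have H2S v b : H2 (col (v, b)) = (v \in ~: S).
  by rewrite !inE; have /and3P[_ /eqP H2f /eqP H2t] := anti v; case: b.
rewrite (hap_cost_M_G H1S H2S); have : cut_size e S <= max_cut e := leq_bigmax S.
lia.
Qed.

Lemma block_row_cost_pos H1 H2 j : ~~ antipodal_at H1 H2 j ->
  exists b, 0 < minn (snp_dist (block_row b j) H1) (snp_dist (block_row b j) H2).
Proof.
rewrite /antipodal_at; setoid_rewrite snp_dist_block_row.
case: (H1 (col (j, true))); case: (H1 (col (j, false)));
case: (H2 (col (j, true))); case: (H2 (col (j, false))) => //= _;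
by [exists false | exists true].
Qed.

Lemma block_weight_le_hap_cost H1 H2 j : ~~ antipodal_at H1 H2 j ->
  kk e %/ n <= hap_cost H1 H2 (M_block e false) + hap_cost H1 H2 (M_block e true).
Proof.
move=> /block_row_cost_pos[b pos_b]; have : kk e %/ n <= hap_cost H1 H2 (M_block e b).
  rewrite hap_cost_M_block (bigD1 j) //=; apply: leq_trans (leq_addr _ _).
  by rewrite leq_pmull.
by case: b {pos_b} => le_b; [rewrite addnC|]; apply: leq_trans le_b (leq_addr _ _).
Qed.

Lemma target_le_block_weight : 0 < E ->
  E * (n - 2) + 2 * (E - max_cut e) <= kk e %/ n.
Proof.
move=> Epos; have [p _] : exists p, p \in [set p | edge_pred e p] by apply/card_gt0P.
have npos : 0 < n := leq_ltn_trans (leq0n _) (ltn_ord p.1).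
have -> : kk e %/ n = 2 * E * n by rewrite /kk -mulnn mulnA mulnK.
nia.
Qed.

Lemma hap_cost_reduction_ge H1 H2 :
  E * (n - 2) + 2 * (E - max_cut e) <= hap_cost H1 H2 (reduction_matrix e).
Proof.
have [->|Epos] := posnP E; first by rewrite mul0n sub0n muln0.
rewrite hap_cost_reduction.
have [/forallP anti|/forallPn[j not_anti]] := boolP [forall j, antipodal_at H1 H2 j].
  exact: leq_trans (hap_cost_M_G_antipodal anti) (leq_addl _ _).
apply: leq_trans (target_le_block_weight Epos) _.
exact: leq_trans (block_weight_le_hap_cost not_anti) (leq_addr _ _).
Qed.

Lemma hap_cost_reduction_max_cut : exists H1 H2 : 'I_(2 * n) -> bool,
  hap_cost H1 H2 (reduction_matrix e) = E * (n - 2) + 2 * (E - max_cut e).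
Proof.
have [S maxS] : {S : {set 'I_n} | max_cut e = cut_size e S}.
  by apply: eq_bigmax; apply/card_gt0P; exists set0.
pose H1 c := col_vertex c \in S; pose H2 c := col_vertex c \in ~: S.
have H1S v b : H1 (col (v, b)) = (v \in S) by rewrite /H1 col_vertexK.
have H2S v b : H2 (col (v, b)) = (v \in ~: S) by rewrite /H2 col_vertexK.
exists H1, H2; rewrite hap_cost_reduction (hap_cost_M_G H1S H2S) -maxS.
rewrite !hap_cost_M_block !big1 // => j _;
  by rewrite !snp_dist_block_row !H1S !H2S inE; case: (j \in S).
Qed.

Lemma ungapped_reduction : ungapped (reduction_matrix e).
Proof.
move=> r; rewrite !mem_cat => r_in a b c le_ab le_bc.
case/or3P: r_in => [r_in|r_in|/mapP[p _ ->]]; last first.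
  by move=> _ _; rewrite ffunE; case: ifP => //; case: ifP.
all: case/flattenP: r_in => s /mapP[j _ ->]; rewrite mem_nseq => /andP[_ /eqP ->].
all: rewrite !ffunE; case: ifP => // /eqP a_j; case: ifP => // /eqP c_j.
all: have := half_leq le_ab; have := half_leq le_bc; rewrite a_j c_j => le_bj le_jb.
all: by have -> : b./2 == j by apply/eqP; lia.
Qed.
End Reduction.

Theorem mainTheorem2 (n : nat) (e : rel 'I_n) :
  symmetric e -> irreflexive e ->
  ungapped (reduction_matrix e) /\
  ungapped_MEC_is (reduction_matrix e)
    (num_edges e * (n - 2) + 2 * (num_edges e - max_cut e)).
Proof.
move=> _ _; split; first exact: ungapped_reduction.
apply: ungapped_MEC_is_min_hap_cost; first exact: hap_cost_reduction_max_cut.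
exact: hap_cost_reduction_ge.
Qed.
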